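(* For a Tychonoff space $X$, the following conditions are equivalent: (1) $C_p(X)$ is distinguished. (2) Every countable partition of $X$ admits a point-finite open expansion in $X$. (3) Every countable collection of pairwise disjoint subsets of $X$ admits a point-finite open expansion in $X$. (4) $X$ is a $\Delta$-space.
   Context: $C_p(X)$ denotes the vector space of all continuous real-valued functions on $X$ with the topology of pointwise convergence. A locally convex space $E$ is distinguished if its strong dual (the topological dual of $E$ with the topology of uniform convergence on bounded subsets of $E$) is barrelled. A partition of $X$ is a cover of $X$ by pairwise disjoint sets. A collection $\{U_\gamma:\gamma\in\Gamma\}$ is an expansion of a collection $\{X_\gamma:\gamma\in\Gamma\}$ in $X$ if $X_\gamma\subseteq U_\gamma\subseteq X$ for every $\gamma$; it is an open expansion if all $U_\gamma$ are open in $X$; it is point-finite if no point of $X$ belongs to infinitely many $U_\gamma$. A topological space $X$ is a $\Delta$-space if for every decreasing sequence $\{D_n:n\in\omega\}$ of subsets of $X$ with $\bigcap_n D_n=\emptyset$ there is a decreasing sequence $\{V_n:n\in\omega\}$ of open subsets of $X$ with $D_n\subseteq V_n$ for all $n$ and $\bigcap_n V_n=\emptyset$. All spaces are Tychonoff and infinite. *)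

From HB Require Import structures.
From mathcomp Require Import all_boot all_order all_algebra.
From mathcomp Require Import all_classical all_reals all_analysis.
Unset Printing Implicit Defensive.
Import Order.TTheory GRing.Theory Num.Theory numFieldNormedType.Exports.
Local Open Scope classical_set_scope.
Local Open Scope ring_scope.

(* Real-valued scalars: any realType R (all realTypes are isomorphic to the reals). *)

Definition tychonoff_space (R : realType) (X : topologicalType) : Prop :=
  accessible_space X /\
  forall (F : set X) (x : X), closed F -> ~ F x ->
    exists f : X -> R, continuous f /\ f x = 0 /\
      (forall y, 0 <= f y <= 1) /\ (forall y, F y -> f y = 1).

(* The underlying set of C_p(X): continuous real-valued functions on X,
   viewed inside the space {ptws X -> R} (product = pointwise topology);
   C_p(X) carries the subspace topology. *)
Definition Cp (R : realType) (X : topologicalType) : set (X -> R) :=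
  [set f | continuous f].

(* B ⊆ C_p(X) is bounded: absorbed by every neighbourhood of 0 in C_p(X)
   (a neighbourhood of 0 in the subspace is of the form V ∩ C_p(X) with V a
   neighbourhood of 0 in {ptws X -> R}). *)
Definition Cp_bounded (R : realType) (X : topologicalType) (B : set (X -> R)) : Prop :=
  B `<=` Cp R X /\
  forall V : set {ptws X -> R}, nbhs (0 : {ptws X -> R}) V ->
    exists r : R, 0 < r /\ forall s : R, r < `|s| ->
      forall f, B f -> exists g : X -> R, V g /\ Cp R X g /\ f = s *: g.

(* The topological dual of C_p(X): continuous linear functionals on C_p(X).
   A functional is represented by a map (X -> R) -> R; only its values on
   C_p(X) are relevant. *)
Definition Cp_dual (R : realType) (X : topologicalType) : set ((X -> R) -> R) :=
  [set phi | (forall (a b : R) (f g : X -> R), Cp R X f -> Cp R X g ->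
                phi (a *: f + b *: g) = a * phi f + b * phi g) /\
             {within (Cp R X : set {ptws X -> R}), continuous (phi : {ptws X -> R} -> R)}].

(* Strong topology beta(E', E) on E' = Cp_dual: uniform convergence on bounded
   subsets of E.  A basic neighbourhood of psi is
   { phi in E' | forall f in B, |phi f - psi f| < eps } with B bounded, eps > 0
   (finite unions of bounded sets are bounded, so these form a base). *)
Definition strong_nbhs (R : realType) (X : topologicalType)
    (psi : (X -> R) -> R) (U : set ((X -> R) -> R)) : Prop :=
  exists (B : set (X -> R)) (eps : R), Cp_bounded R X B /\ 0 < eps /\
    [set phi | Cp_dual R X phi /\ forall f, B f -> `|phi f - psi f| < eps] `<=` U.

Definition strong_closed (R : realType) (X : topologicalType)
    (A : set ((X -> R) -> R)) : Prop :=
  forall psi, Cp_dual R X psi -> ~ A psi ->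
    strong_nbhs R X psi (~` A).

Definition strong_barrel (R : realType) (X : topologicalType)
    (A : set ((X -> R) -> R)) : Prop :=
  A `<=` Cp_dual R X /\
  strong_closed R X A /\
  (forall (phi psi : (X -> R) -> R) (a b : R), A phi -> A psi ->
     `|a| + `|b| <= 1 -> A (a *: phi + b *: psi)) /\
  (forall phi, Cp_dual R X phi ->
     exists r : R, 0 < r /\ forall s : R, r <= `|s| ->
       exists chi, A chi /\ phi = s *: chi).

(* C_p(X) is distinguished: its strong dual is barrelled, i.e. every barrel of
   the strong dual is a neighbourhood of 0 in the strong topology. *)
Definition Cp_distinguished (R : realType) (X : topologicalType) : Prop :=
  forall A : set ((X -> R) -> R), strong_barrel R X A -> strong_nbhs R X (fun _ => 0) A.

(* Countable collections are indexed by nat (finite ones padded with empty sets). *)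
Definition pairwise_disjoint_fam (X : Type) (D : nat -> set X) : Prop :=
  forall i j, i <> j -> D i `&` D j = set0.

Definition partition_fam (X : Type) (D : nat -> set X) : Prop :=
  pairwise_disjoint_fam X D /\ \bigcup_n D n = setT.

Definition point_finite_open_expansion (X : topologicalType)
    (D U : nat -> set X) : Prop :=
  (forall n, D n `<=` U n) /\ (forall n, open (U n)) /\
  (forall x, finite_set [set n | U n x]).

Definition delta_space (X : topologicalType) : Prop :=
  forall D : nat -> set X,
    (forall n, D n.+1 `<=` D n) -> \bigcap_n D n = set0 ->
    exists V : nat -> set X,
      (forall n, open (V n)) /\ (forall n, V n.+1 `<=` V n) /\
      (forall n, D n `<=` V n) /\ \bigcap_n V n = set0.

(* The last two equivalences are combinatorics of sequences of sets: a disjoint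
   family is completed to a partition; a decreasing sequence with empty
   intersection is cut into its disjoint layers, and conversely the tails of a
   disjoint family form such a sequence; expansions and Delta-witnesses are
   exchanged by taking tails, point-finiteness corresponding to empty
   intersection.

   For the first equivalence we use that the dual of C_p(X) consists of finite
   combinations of point evaluations (by Tychonoff interpolation on finite
   sets).  (2) => (1): a barrel absorbs each evaluation at x with a radius
   w(x); the level sets of w form a partition, and an expansion of it yields a
   bounded set whose polar is inside the barrel.  (1) => (2): weighting each
   point by one plus the index of its member, the weighted unit ball of the
   dual is a barrel, hence contains a strong neighbourhood of 0 given by a
   bounded set B; the superlevel sets of the functions of B give the
   expansion. *)

From HB Require Import structures.
From mathcomp Require Import all_boot all_order all_algebra.
From mathcomp Require Import all_classical all_reals all_analysis.
From mathcomp Require Import ring lra.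
Import Order.TTheory GRing.Theory Num.Theory numFieldNormedType.Exports.
Local Open Scope classical_set_scope.

Lemma finite_nat_bounded {A : set nat} : finite_set A ->
  exists N, forall k, A k -> (k < N)%N.
Proof.
move=> fA; exists (\max_(k <- finmap.enum_fset (fset_set A)) k).+1 => k Ak.
rewrite ltnS; apply: (@leq_bigmax_seq _ _ xpredT (fun k => k)) => //.
by rewrite in_fset_set // inE.
Qed.

Lemma bounded_nat_finite (A : set nat) (N : nat) :
  (forall k, A k -> (k < N)%N) -> finite_set A.
Proof.
move=> AN; apply: (@sub_finite_set _ _ `I_N); last exact: finite_II.
by move=> k /AN.
Qed.

Section SequencesOfSets.
Context {T : Type}.
Implicit Types (D U V : nat -> set T) (x : T).

Definition decreasing D := forall n, D n.+1 `<=` D n.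

Definition tail_union U n := \bigcup_(k in [set k | (n <= k)%N]) U k.

Definition layer D n := D n `\` D n.+1.

Definition completion D n :=
  if n is 0%N then D 0%N `|` ~` \bigcup_k D k else D n.

Lemma decreasing_le {D m n} : decreasing D -> (m <= n)%N -> D n `<=` D m.
Proof.
move=> dD /subnK <-; elim: (n - m)%N => // d IH x.
by rewrite addSn => /dD /IH.
Qed.

Lemma bigcap_empty_avoid {V} x : \bigcap_n V n = set0 -> exists m, ~ V m x.
Proof.
move=> V0; apply: contrapT => inV; suff : (\bigcap_n V n) x by rewrite V0.
by move=> k _; apply: contrapT => nVk; apply: inV; exists k.
Qed.

Lemma leave_stage D n d x : D n x -> ~ D (n + d)%N x ->
  exists2 k, (n <= k)%N & layer D k x.
Proof.
elim: d => [|d IH] Dn nDd; first by rewrite addn0 in nDd.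
have [Dd|] := pselect (D (n + d)%N x); last exact: IH.
by exists (n + d)%N; [exact: leq_addr | split => //; rewrite -addnS].
Qed.

Lemma layer_cover {D} : decreasing D -> \bigcap_n D n = set0 ->
  forall n, D n `<=` tail_union (layer D) n.
Proof.
move=> dD D0 n x Dnx; have [m nDm] := bigcap_empty_avoid x D0.
have [nm|mn] := leqP n m.
  have nDnd : ~ D (n + (m - n))%N x by rewrite subnKC.
  by have [k nk Lk] := @leave_stage D n (m - n) x Dnx nDnd; exists k.
by exfalso; apply: nDm; exact: (decreasing_le dD (ltnW mn) _ Dnx).
Qed.

Lemma layer_disjoint {D} : decreasing D -> pairwise_disjoint_fam T (layer D).
Proof.
move=> dD i j ij; apply/seteqP; split => // x [[Di nDi] [Dj nDj]].
have [lt_ij|lt_ji|//] := ltngtP i j.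
  by apply: nDi; exact: decreasing_le dD lt_ij _ Dj.
by apply: nDj; exact: decreasing_le dD lt_ji _ Di.
Qed.

Lemma tail_decreasing U : decreasing (tail_union U).
Proof. by move=> n x [k /= nk Ukx]; exists k => //=; exact: ltnW. Qed.

Lemma tail_point_finite {U} : (forall x, finite_set [set n | U n x]) ->
  \bigcap_n tail_union U n = set0.
Proof.
move=> pU; apply/seteqP; split => // x Vx.
have [N hN] := finite_nat_bounded (pU x).
have [k /= Nk Ukx] := Vx N I.
by have := hN k Ukx; rewrite ltnNge Nk.
Qed.

Lemma tail_disjoint {D} : pairwise_disjoint_fam T D ->
  \bigcap_n tail_union D n = set0.
Proof.
move=> dD; apply/seteqP; split => // x Fx.
have [k /= _ Dk] := Fx 0%N I; have [k' /= kk' Dk'] := Fx k.+1 I.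
have neq_kk' : k <> k' by move=> e; rewrite e ltnn in kk'.
by have /seteqP[sub0 _] := dD k k' neq_kk'; exact: (sub0 x (conj Dk Dk')).
Qed.

Lemma decreasing_point_finite {V} : decreasing V -> \bigcap_n V n = set0 ->
  forall x, finite_set [set n | V n x].
Proof.
move=> dV V0 x; have [m nVm] := bigcap_empty_avoid x V0.
apply: (@bounded_nat_finite _ m) => n Vn; rewrite ltnNge; apply/negP => mn.
by apply: nVm; exact: (decreasing_le dV mn _ Vn).
Qed.

Lemma completion_partition {D} : pairwise_disjoint_fam T D ->
  partition_fam T (completion D).
Proof.
move=> dD; split.
  move=> [|i] [|j] //= ij; apply/seteqP; split => // x [].
  - case=> [D0 Dj|nD Dj]; last by apply: nD; exists j.+1.
    by have /seteqP[+ _] := dD 0%N j.+1 ij; apply; split.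
  - move=> Di [D0|nD]; last by apply: nD; exists i.+1.
    by have /seteqP[+ _] := dD i.+1 0%N ij; apply; split.
  - by move=> Di Dj; have /seteqP[+ _] := dD i.+1 j.+1 ij; apply; split.
apply/seteqP; split => // x _.
have [[n _ Dn]|nD] := pselect ((\bigcup_n D n) x).
  by exists n => //; case: n Dn => //= Dn; left.
by exists 0%N => //; right.
Qed.

Lemma completion_sub D n : D n `<=` completion D n.
Proof. by case: n => [|n] x Dx //=; left. Qed.

End SequencesOfSets.

Section ExpansionProperties.
Variable X : topologicalType.

Definition partition_expandable := forall D : nat -> set X,
  partition_fam X D -> exists U, point_finite_open_expansion X D U.

Definition disjoint_expandable := forall D : nat -> set X,
  pairwise_disjoint_fam X D -> exists U, point_finite_open_expansion X D U.

Lemma disjoint_partition_expandable :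
  disjoint_expandable -> partition_expandable.
Proof. by move=> h D [dD _]; exact: h. Qed.

(* Expand the completed partition; its members contain the original ones. *)
Lemma partition_disjoint_expandable :
  partition_expandable -> disjoint_expandable.
Proof.
move=> h D dD; have [U [sU oU]] := h _ (completion_partition dD).
by exists U; split => // n; apply: subset_trans (sU n); exact: completion_sub.
Qed.

(* Expand the layers of a decreasing sequence; the tails of the expansion
   witness the Delta-property. *)
Lemma disjoint_expandable_delta : disjoint_expandable -> delta_space X.
Proof.
move=> h D dD D0; have [U [sU [oU pU]]] := h _ (layer_disjoint dD).
exists (tail_union U); split.
  by move=> n; apply: bigcup_open => k _; exact: oU.
split; first exact: tail_decreasing.
split; last exact: tail_point_finite.
move=> n x /(layer_cover dD D0) [k nk Lk]; exists k => //; exact: sU.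
Qed.

(* Apply the Delta-property to the tails of a disjoint family. *)
Lemma delta_disjoint_expandable : delta_space X -> disjoint_expandable.
Proof.
move=> h D dD; have [V [oV [dV [sV V0]]]] :=
  h _ (tail_decreasing D) (tail_disjoint dD).
exists V; split; first by move=> n x Dx; apply: sV; exists n => /=.
by split => //; exact: decreasing_point_finite.
Qed.

End ExpansionProperties.

Local Open Scope ring_scope.

Section ContinuousRealFunctions.
Context {R : realType} {T : topologicalType}.
Implicit Types (f : T -> R) (a : R).

Lemma continuous_cstM a f : continuous f -> continuous (fun y => a * f y).
Proof.
move=> cf y; apply: (continuousM (s := fun=> a) (t := f)); last exact: cf.
exact: cst_continuous.
Qed.

Lemma continuous_sum (I : Type) (s : seq I) (F : I -> T -> R) :
  (forall i, continuous (F i)) -> continuous (fun y => \sum_(i <- s) F i y).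
Proof.
move=> cF; elim: s => [|i s IH].
  by under eq_fun do rewrite big_nil; exact: cst_continuous.
under eq_fun do rewrite big_cons.
by move=> y; apply: continuousD; [exact: cF|exact: IH].
Qed.

Lemma continuous_bigmax (I : Type) (s : seq I) (F : I -> T -> R) :
  (forall i, continuous (F i)) ->
  continuous (fun y => \big[Num.max/0]_(i <- s) F i y).
Proof.
move=> cF; elim: s => [|i s IH].
  by under eq_fun do rewrite big_nil; exact: cst_continuous.
under eq_fun do rewrite big_cons.
by move=> y; apply: (continuous_max (cF i y)); exact: IH.
Qed.

Lemma continuous_lincomb (I : Type) (s : seq I) (c : I -> R) (F : I -> T -> R) :
  (forall i, continuous (F i)) ->
  continuous (fun y => \sum_(i <- s) c i * F i y).
Proof. by move=> cF; apply: continuous_sum => i; exact: continuous_cstM. Qed.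

End ContinuousRealFunctions.

Definition clamp {R : realDomainType} (m a : R) := Num.max (- m) (Num.min m a).

Lemma clamp_id {R : realDomainType} (m a : R) : `|a| <= m -> clamp m a = a.
Proof. by rewrite ler_norml => /andP[ma am]; rewrite /clamp min_r // max_r. Qed.

Lemma norm_clamp {R : realDomainType} (m a : R) : 0 <= m -> `|clamp m a| <= m.
Proof.
move=> m0; rewrite ler_norml; apply/andP; split; first by rewrite le_max lexx.
by rewrite ge_max ge_min lexx /= andbT lerNl (le_trans _ m0) // oppr_le0.
Qed.

Lemma norm_sg_le1 {R : numDomainType} (x : R) : `|Num.sg x| <= 1.
Proof. by rewrite normr_sg; case: (x != 0); rewrite ?ler01 ?lexx. Qed.

Section CpBasics.
Context {R : realType} {X : topologicalType}.

Definition box (s : seq X) (d : R) : set {ptws X -> R} :=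
  [set h | forall x, x \in s -> `|h x| < d].

Lemma nbhs0_box (V : set {ptws X -> R}) : nbhs (0 : {ptws X -> R}) V ->
  exists s d, 0 < d /\ box s d `<=` V.
Proof.
pose G := filter_from [set p : seq X * R | 0 < p.2] (fun p => box p.1 p.2).
have FG : Filter G.
  apply: filter_from_filter; first by exists ([::], 1) => /=.
  move=> [s1 d1] [s2 d2] /= d10 d20; exists (s1 ++ s2, Num.min d1 d2) => /=.
    by rewrite lt_min d10 d20.
  move=> h /= hb; split => x xs.
    by have := hb x; rewrite mem_cat xs lt_min => /(_ isT) /andP[].
  by have := hb x; rewrite mem_cat xs orbT lt_min => /(_ isT) /andP[].
have : {ptws, G --> (0 : X -> R)}.
  apply/pointwise_cvgP => t; apply/cvgrPdist_lt => e e0.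
  exists ([:: t], e) => //= h /=; rewrite /box /= => /(_ t).
  by rewrite mem_seq1 eqxx sub0r normrN => /(_ isT).
by move=> /(_ V) GV /GV [[s d] /= d0 sV]; exists s, d.
Qed.

Lemma ptws_eval_continuous (t : X) : continuous (fun f : {ptws X -> R} => f t).
Proof.
move=> f; have : {ptws, nbhs f --> f} by [].
by move/pointwise_cvgP => /(_ t).
Qed.

Lemma Cp0 : Cp R X 0.
Proof. exact: cst_continuous. Qed.

Lemma CpZ a f : Cp R X f -> Cp R X (a *: f).
Proof. exact: continuous_cstM. Qed.

Lemma CpB f g : Cp R X f -> Cp R X g -> Cp R X (f - g).
Proof. by move=> cf cg x; apply: continuousB; [exact: cf|exact: cg]. Qed.

End CpBasics.

Section Interpolation.
Context {R : realType} {X : topologicalType}.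
Hypothesis tychX : tychonoff_space R X.

Lemma bump_function {z : X} {C : set X} : closed C -> ~ C z ->
  exists phi : X -> R, continuous phi /\ phi z = 1 /\
    (forall y, 0 <= phi y <= 1) /\ (forall y, C y -> phi y = 0).
Proof.
move=> cC nCz; have [f [cf [fz [f01 fC]]]] := tychX.2 C z cC nCz.
exists (fun y => 1 - f y); split.
  by move=> x; apply: continuousB; [exact: cst_continuous|exact: cf].
split; first by rewrite fz subr0.
split; last by move=> y /fC ->; rewrite subrr.
move=> y; have /andP[f0 f1] := f01 y.
by rewrite subr_ge0 f1 /= lerBlDr lerDl.
Qed.

Lemma separating_bumps {zs : seq X} {O : X -> set X} :
  (forall z, z \in zs -> open (O z) /\ O z z) ->
  exists phi : X -> X -> R, forall z, continuous (phi z) /\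
    (z \in zs -> [/\ forall y, 0 <= phi z y <= 1,
       forall y, ~ O z y -> phi z y = 0 &
       forall y, y \in zs -> phi z y = (y == z)%:R]).
Proof.
move=> hO; suff /choice[phi hphi] : forall z, exists p : X -> R,
    continuous p /\ (z \in zs -> [/\ forall y, 0 <= p y <= 1,
      forall y, ~ O z y -> p y = 0 & forall y, y \in zs -> p y = (y == z)%:R]).
  by exists phi.
move=> z.
have [zsz|zsNz] := boolP (z \in zs); last first.
  by exists (fun _ => 0); split => //; exact: cst_continuous.
have [oO Ozz] := hO z zsz.
pose C := ~` O z `|` [set` seq.filter (predC1 z) zs].
have cC : closed C.
  apply: closedU; first by rewrite closedC.
  by apply: (accessible_finite_set_closed.1 tychX.1); exact: finite_seq.
have nCz : ~ C z by move=> [/(_ Ozz)//|/=]; rewrite mem_filter /= eqxx.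
have [phi [cphi [phiz [phi01 phiC]]]] := bump_function cC nCz.
exists phi; split => // _; split => // [y nOy|y yzs]; first by apply: phiC; left.
have [->|yz] := eqVneq y z; first by rewrite phiz.
by apply: phiC; right; rewrite /= mem_filter /= yz.
Qed.

Lemma interpolation (zs : seq X) (v : X -> R) (O : X -> set X) : uniq zs ->
  (forall z, z \in zs -> open (O z) /\ O z z) ->
  exists g : X -> R, continuous g /\ (forall z, z \in zs -> g z = v z) /\
    (forall y c, 0 <= c -> (forall z, z \in zs -> O z y -> `|v z| <= c) ->
       `|g y| <= c).
Proof.
move=> uzs hO; have [phi hphi] := separating_bumps hO.
have cphi z : continuous (phi z) by have [] := hphi z.
have phi_zs z y : z \in zs -> y \in zs -> phi z y = (y == z)%:R.
  by move=> zzs; have [_ /(_ zzs) [_ _]] := hphi z; apply.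
pose g0 y := \sum_(z <- zs) v z * phi z y.
pose M y := \big[Num.max/0]_(z <- zs) (`|v z| * phi z y).
have M0 y : 0 <= M y.
  by rewrite /M; elim/big_rec: _ => // i x _ hx; rewrite le_max hx orbT.
have g0_zs y : y \in zs -> g0 y = v y.
  move=> yzs; rewrite /g0 (bigD1_seq y) //= phi_zs // eqxx mulr1.
  rewrite big1_seq ?addr0 //.
  by move=> z /andP[zy zzs]; rewrite phi_zs // eq_sym (negbTE zy) mulr0.
have M_zs y : y \in zs -> M y = `|v y|.
  move=> yzs; apply/eqP; rewrite eq_le; apply/andP; split.
    rewrite /M big_seq; apply: bigmax_le => // z /= zzs.
    by rewrite phi_zs //; case: eqP => [->|_]; rewrite ?mulr1 ?mulr0.
  have := le_bigmax_seq 0 y xpredT (fun z => `|v z| * phi z y) yzs isT.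
  by rewrite phi_zs // eqxx mulr1.
have cM : continuous M.
  by apply: continuous_bigmax => z; exact: continuous_cstM.
exists (fun y => clamp (M y) (g0 y)); split.
  move=> y; apply: (continuous_max (f := fun y => - M y)).
    exact: continuousN (cM y).
  apply: (continuous_min (f := M) (g := g0)); first exact: cM.
  exact: continuous_lincomb.
split; first by move=> z zzs; rewrite M_zs // g0_zs // clamp_id.
move=> y c c0 hc; apply: le_trans (norm_clamp _ _ (M0 y)) _.
rewrite /M big_seq; apply: bigmax_le => // z /= zzs.
have [_ /(_ zzs) [phi01 phi0 _]] := hphi z.
have [Ozy|nOzy] := pselect (O z y); last by rewrite phi0 ?mulr0.
apply: le_trans (hc z zzs Ozy); apply: ler_piMr => //.
by have /andP[] := phi01 y.
Qed.

Lemma interpolation_sup (zs : seq X) (v : X -> R) :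
  exists g : X -> R, continuous g /\ (forall z, z \in zs -> g z = v z) /\
    (forall c, 0 <= c -> (forall z, z \in zs -> `|v z| <= c) ->
       forall y, `|g y| <= c).
Proof.
have [g [cg [gv gb]]] := @interpolation (undup zs) v (fun=> setT) (undup_uniq zs)
  (fun _ _ => conj openT I).
exists g; split => //; split => [z zzs|c c0 hc y]; first by rewrite gv ?mem_undup.
by apply: gb => // z; rewrite mem_undup => zzs _; exact: hc.
Qed.

End Interpolation.

Section Dual.
Context {R : realType} {X : topologicalType}.

Definition evcomb (ps : seq (X * R)) : (X -> R) -> R :=
  fun f => \sum_(p <- ps) p.2 * f p.1.

Lemma evcomb1 x t : evcomb [:: (x, t)] = fun f => t * f x.
Proof. by apply: funext => f; rewrite /evcomb big_cons big_nil addr0. Qed.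

Lemma evcomb_map (zs : seq X) (c : X -> R) f :
  evcomb (map (fun z => (z, c z)) zs) f = \sum_(z <- zs) c z * f z.
Proof. by rewrite /evcomb big_map. Qed.

Lemma evcomb_dual ps : Cp_dual R X (evcomb ps).
Proof.
split.
  move=> a b f g _ _; rewrite /evcomb !mulr_sumr -big_split /=.
  apply: eq_bigr => p _; rewrite !fctE mulrDr !mulrA.
  by rewrite ![_ * a]mulrC ![_ * b]mulrC.
have : continuous (fun f : {ptws X -> R} => \sum_(p <- ps) p.2 * f p.1).
  by apply: continuous_lincomb => p; exact: ptws_eval_continuous.
exact: continuous_subspaceT.
Qed.

Lemma dual_comb {phi psi} a b : Cp_dual R X phi -> Cp_dual R X psi ->
  Cp_dual R X (fun f => a * phi f + b * psi f).
Proof.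
move=> [phi_lin phi_cont] [psi_lin psi_cont]; split.
  by move=> a' b' f g cf cg; rewrite phi_lin // psi_lin //; ring.
move=> x; apply: (@continuousD _ _ (subspace (Cp R X : set {ptws X -> R}))
  (fun f => a * phi f) (fun f => b * psi f) x).
  exact: (@continuous_cstM _ (subspace (Cp R X : set {ptws X -> R}))).
exact: (@continuous_cstM _ (subspace (Cp R X : set {ptws X -> R}))).
Qed.

Section Linearity.
Context {phi : (X -> R) -> R} (phi_dual : Cp_dual R X phi).

Lemma dualZ a f : Cp R X f -> phi (a *: f) = a * phi f.
Proof.
move=> cf; have := phi_dual.1 a 0 f f cf cf.
by rewrite scale0r addr0 mul0r addr0.
Qed.

Lemma dualD f g : Cp R X f -> Cp R X g -> phi (f + g) = phi f + phi g.
Proof.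
by move=> cf cg; have := phi_dual.1 1 1 f g cf cg; rewrite !scale1r !mul1r.
Qed.

Lemma dual0 : phi 0 = 0.
Proof. by have := @dualZ 0 0 Cp0; rewrite scale0r mul0r. Qed.

Lemma dual_lincomb (I : Type) (l : seq I) (a : I -> R) (e : I -> X -> R) :
  (forall i, Cp R X (e i)) ->
  phi (fun y => \sum_(i <- l) a i * e i y) = \sum_(i <- l) a i * phi (e i).
Proof.
move=> ce; elim: l => [|i l IH].
  rewrite big_nil; have -> : (fun y => \sum_(i <- [::]) a i * e i y) = 0.
    by apply: funext => y; rewrite big_nil.
  exact: dual0.
have -> : (fun y => \sum_(j <- i :: l) a j * e j y) =
    a i *: e i + (fun y => \sum_(j <- l) a j * e j y).
  by apply/funext => y; rewrite big_cons !fctE.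
rewrite dualD ?dualZ ?IH ?big_cons //; first exact: CpZ.
exact: continuous_lincomb.
Qed.

(* Continuity at 0 gives a finite set [s] such that [phi] kills every function
   vanishing on [s]. *)
Lemma dual_finite_support :
  exists s : seq X, forall g, Cp R X g -> (forall x, x \in s -> g x = 0) ->
    phi g = 0.
Proof.
have : phi @ nbhs_subspace (A := (Cp R X : set {ptws X -> R}))
    (0 : {ptws X -> R}) --> phi 0 by exact: phi_dual.2 0.
rewrite -nbhs_subspace_in; last exact: Cp0.
move/cvgrPdist_lt => /(_ 1 ltr01).
rewrite dual0 /prop_near1 /within /= => /nbhs0_box [s [d [d0 sV]]].
exists s => g cg g0; apply/eqP; apply: contraT => phig0.
pose t := 2 / `|phi g|.
have : box s d (t *: g) by move=> x xs; rewrite fctE g0 // scaler0 normr0.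
move/sV => /(_ (CpZ t g cg)); rewrite sub0r normrN dualZ //.
rewrite normrM /t normrM ger0_norm // normrV ?unitfE ?normr_eq0 //.
by rewrite normr_id divfK ?normr_eq0 // ltNge ler1n.
Qed.

End Linearity.

Hypothesis tychX : tychonoff_space R X.

(* Every continuous linear functional on C_p(X) is a finite combination of
   point evaluations: decompose [g] as its interpolant on the support plus a
   function vanishing there. *)
Lemma dual_representation {phi} : Cp_dual R X phi ->
  exists zs : seq X, exists c : X -> R,
    uniq zs /\ forall g, Cp R X g -> phi g = \sum_(z <- zs) c z * g z.
Proof.
move=> phi_dual; have [s phi_s] := dual_finite_support phi_dual.
pose zs := undup s.
have /choice[e he] : forall z, exists e : X -> R,
    continuous e /\ forall y, y \in zs -> e y = (y == z)%:R.
  move=> z; have [e [ce [ez _]]] :=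
    interpolation_sup tychX zs (fun y => (y == z)%:R).
  by exists e.
have ce z : Cp R X (e z) by have [] := he z.
exists zs, (fun z => phi (e z)); split; first exact: undup_uniq.
move=> g cg; pose F y := \sum_(z <- zs) g z * e z y.
have cF : Cp R X F by exact: continuous_lincomb.
have cgF : Cp R X (g - F) by exact: CpB.
have gF_s x : x \in s -> (g - F) x = 0.
  move=> xs; have xzs : x \in zs by rewrite mem_undup.
  rewrite !fctE /F (bigD1_seq x) //=; last exact: undup_uniq.
  rewrite (he x).2 // eqxx mulr1 big1_seq ?addr0 ?subrr //.
  by move=> z /andP[zx zzs]; rewrite (he z).2 // eq_sym (negbTE zx) mulr0.
have -> : phi g = phi ((g - F) + F) by rewrite subrK.
rewrite dualD // phi_s // add0r /F dual_lincomb //.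
by apply: eq_bigr => z _; rewrite mulrC.
Qed.

End Dual.

Section BoundedSets.
Context {R : realType} {X : topologicalType}.

Lemma pointwise_bounded_Cp_bounded (B : set (X -> R)) (M : X -> R) :
  B `<=` Cp R X -> (forall f x, B f -> `|f x| <= M x) -> Cp_bounded R X B.
Proof.
move=> BCp hM; split => // V /nbhs0_box [s [d [d0 sV]]].
pose K := \big[Num.max/0]_(x <- s) `|M x|.
have K0 : 0 <= K.
  by rewrite /K; elim/big_rec: _ => // i x _ hx; rewrite le_max hx orbT.
have K1d : 0 < (K + 1) / d by rewrite divr_gt0 // ltr_wpDl.
exists ((K + 1) / d); split => // a Ka f Bf.
have a0 : a != 0 by rewrite -normr_gt0; exact: lt_trans Ka.
exists (a^-1 *: f); split; last first.
  by split; [exact: CpZ (BCp _ Bf)|rewrite scalerA divff // scale1r].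
apply: sV => x xs; rewrite fctE normrM normrV ?unitfE //.
rewrite ltr_pdivrMl ?normr_gt0 //.
have fxK : `|f x| <= K.
  apply: le_trans (hM f x Bf) _; apply: le_trans (ler_norm _) _.
  exact: (le_bigmax_seq 0 x xpredT (fun x => `|M x|) xs isT).
apply: le_lt_trans fxK _; rewrite -ltr_pdivrMr // mulrC.
by apply: lt_trans Ka; rewrite mulrC ltr_pM2r ?invr_gt0 // ltrDl.
Qed.

Lemma Cp_bounded_pointwise {B : set (X -> R)} : Cp_bounded R X B ->
  forall x, exists K, forall f, B f -> `|f x| < K.
Proof.
move=> [BCp hB] x.
have := ptws_eval_continuous x (0 : {ptws X -> R}).
move/cvgrPdist_lt => /(_ 1 ltr01) hV; have [r [r0 hr]] := hB _ hV.
exists (r + 1) => f Bf; have [|g [Vg [_ ->]]] := hr (r + 1) _ f Bf.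
  by rewrite ger0_norm ?ltrDl // addr_ge0 // ltW.
move: Vg; rewrite /= fctE sub0r normrN normrM => g1.
by rewrite ger0_norm ?addr_ge0 ?ltW // gtr_pMr // ltr_wpDl // ltW.
Qed.

End BoundedSets.

Section StrongDual.
Context {R : realType} {X : topologicalType}.

Lemma strong_closed_ext {A : set ((X -> R) -> R)} {phi psi} :
  strong_closed R X A -> A psi -> Cp_dual R X phi -> Cp_dual R X psi ->
  (forall g, Cp R X g -> phi g = psi g) -> A phi.
Proof.
move=> clA Apsi phi_dual psi_dual phi_psi; apply: contrapT => nAphi.
have [B [eps [[BCp _] [eps0 sub]]]] := clA phi phi_dual nAphi.
apply: (sub psi) => //; split => // f Bf.
by rewrite phi_psi ?subrr ?normr0 //; exact: BCp.
Qed.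

Context {A : set ((X -> R) -> R)} (barrelA : strong_barrel R X A).

Lemma barrel_comb {phi psi} a b : A phi -> A psi -> `|a| + `|b| <= 1 ->
  A (fun f => a * phi f + b * psi f).
Proof. exact: barrelA.2.2.1. Qed.

Lemma barrel0 : A (fun _ => 0).
Proof.
have [r [r0 hr]] := barrelA.2.2.2 _ (evcomb_dual [::]).
have [chi [Achi _]] : exists chi, A chi /\ evcomb [::] = r *: chi.
  by apply: hr; rewrite ger0_norm // ltW.
have := barrel_comb 0 0 Achi Achi; rewrite normr0 addr0 ler01 => /(_ isT).
by congr A; apply: funext => f; rewrite !mul0r addr0.
Qed.

Lemma barrel_lincomb {I : eqType} {l : seq I} {lam : I -> R}
    {e : I -> (X -> R) -> R} :
  (forall i, A (e i)) -> \sum_(i <- l) `|lam i| <= 1 ->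
  A (fun f => \sum_(i <- l) lam i * e i f).
Proof.
move=> Ae; elim: l lam => [|i l IH] lam hl.
  by have := barrel0; congr A; apply: funext => f; rewrite big_nil.
rewrite big_cons in hl; set S := \sum_(j <- l) `|lam j| in hl.
have [S0|S_neq0] := eqVneq S 0.
  have lam0 j : j \in l -> lam j = 0.
    move=> jl; apply/normr0_eq0; move/eqP: S0.
    by rewrite psumr_eq0 // => /allP/(_ _ jl)/eqP.
  have := barrel_comb (lam i) 0 (Ae i) (Ae i); rewrite normr0 addr0.
  move: hl; rewrite S0 addr0 => hl /(_ hl).
  congr A; apply: funext => f.
  rewrite big_cons mul0r addr0 big_seq big1 ?addr0 //.
  by move=> j jl; rewrite lam0 // mul0r.
have S_gt0 : 0 < S by rewrite lt_neqAle eq_sym S_neq0 sumr_ge0.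
have AlamS : A (fun f => \sum_(j <- l) lam j / S * e j f).
  apply: IH; rewrite le_eqVlt; apply/orP; left; apply/eqP.
  rewrite -(divff S_neq0) mulr_suml; apply: eq_bigr => j _.
  by rewrite normrM normfV (gtr0_norm S_gt0).
have := barrel_comb (lam i) S (Ae i) AlamS; rewrite (gtr0_norm S_gt0) => /(_ hl).
congr A; apply: funext => f; rewrite big_cons; congr (_ + _).
rewrite mulr_sumr; apply: eq_bigr => j _.
by rewrite mulrA mulrCA divff // mulr1.
Qed.

Lemma barrel_absorbs_evaluation x : exists r : R, 0 < r /\
  forall t, `|t| * r <= 1 -> A (fun f => t * f x).
Proof.
have [r [r0 hr]] := barrelA.2.2.2 _ (evcomb_dual [:: (x, 1)]).
have [chi [Achi echi]] : exists chi, A chi /\ evcomb [:: (x, 1)] = r *: chi.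
  by apply: hr; rewrite ger0_norm // ltW.
exists r; split => // t ht.
have := barrel_comb (t * r) 0 Achi Achi.
rewrite normr0 addr0 normrM (ger0_norm (ltW r0)) => /(_ ht).
congr A; apply: funext => f.
have := congr1 (fun F => F f) echi; rewrite evcomb1 /= mul1r fctE => ->.
by rewrite mul0r addr0 mulrA.
Qed.

Lemma barrel_weighted_evcomb {w : X -> R} : (forall x, 0 < w x) ->
  (forall x t, `|t| * w x <= 1 -> A (fun f => t * f x)) ->
  forall (zs : seq X) (c : X -> R), \sum_(z <- zs) `|c z| * w z <= 1 ->
    A (evcomb (map (fun z => (z, c z)) zs)).
Proof.
move=> w0 Aw zs c hc.
have Ae z : A (fun f => (Num.sg (c z) / w z) * f z).
  apply: Aw; rewrite normrM normfV (gtr0_norm (w0 z)) divfK ?gt_eqF //.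
  exact: norm_sg_le1.
have hlam : \sum_(z <- zs) `|(`|c z| * w z)| <= 1.
  rewrite (eq_bigr (fun z => `|c z| * w z)) // => z _.
  by rewrite ger0_norm // mulr_ge0 // ltW.
have := barrel_lincomb Ae hlam; congr A; apply: funext => f.
rewrite evcomb_map; apply: eq_bigr => z _; rewrite mulrA; congr (_ * _).
by rewrite [Num.sg _ / _]mulrC mulrA mulfK ?gt_eqF // mulrC mulr_sg_norm.
Qed.

End StrongDual.

Definition level_set {R : realType} {T : Type} (w : T -> R) (n : nat) : set T :=
  [set x | n%:R <= w x < n.+1%:R].

Lemma level_set_trunc {R : realType} {T : Type} {w : T -> R} {x : T} :
  0 < w x -> level_set w (Num.trunc (w x)) x.
Proof. by move=> wx0; exact: truncn_itv (ltW wx0). Qed.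

Lemma level_set_partition {R : realType} {T : Type} (w : T -> R) :
  (forall x, 0 < w x) -> partition_fam T (level_set w).
Proof.
move=> w0; split; last first.
  apply/seteqP; split => // x _.
  by exists (Num.trunc (w x)); last exact: level_set_trunc.
move=> i j ij; apply/seteqP; split => // x [/andP[iw wi] /andP[jw wj]].
suff : w x < w x by rewrite ltxx.
have [lt_ij|lt_ji|//] := ltngtP i j.
  by apply: (lt_le_trans wi); apply: le_trans jw; rewrite ler_nat.
by apply: (lt_le_trans wj); apply: le_trans iw; rewrite ler_nat.
Qed.

Section DistinguishedFromExpansion.
Context {R : realType} {X : topologicalType}.
Hypothesis tychX : tychonoff_space R X.

(* The continuous functions bounded at each point [y] by [n + 1] for the
   largest index [n] of a member [U n] containing [y]. *)
Definition expansion_ball (U : nat -> set X) : set (X -> R) :=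
  [set g | Cp R X g /\ forall y c, 0 <= c ->
    (forall n, U n y -> n.+1%:R <= c) -> `|g y| <= c].

(* Point-finiteness of [U] makes the expansion ball pointwise bounded. *)
Lemma expansion_ball_bounded (U : nat -> set X) :
  (forall y, finite_set [set n | U n y]) -> Cp_bounded R X (expansion_ball U).
Proof.
move=> pU; have /choice[N hN] := fun y => finite_nat_bounded (pU y).
apply: (@pointwise_bounded_Cp_bounded _ _ _ (fun y => (N y)%:R)) => [g []//|g y].
by move=> [_ gU]; apply: gU => // n /hN nN; rewrite ler_nat.
Qed.

(* (2) => (1): a barrel [A] absorbs the evaluation at [x] with some radius
   [w x].  Expanding the level sets of [w] yields a bounded set [B].  A
   functional [sum_z c_z delta_z] of size < 1 on [B] is tested against a
   function of [B] interpolating [sg c_z * w z]: this shows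
   [sum_z |c_z| w z < 1], so the functional is an absolutely convex
   combination of absorbed evaluations and lies in [A]. *)
Lemma partition_expandable_distinguished :
  partition_expandable X -> Cp_distinguished R X.
Proof.
move=> hP A barrelA.
have /choice[w hw] := barrel_absorbs_evaluation barrelA.
have w0 x : 0 < w x by have [] := hw x.
have [U [sU [oU pU]]] := hP _ (level_set_partition w w0).
exists (expansion_ball U), 1; split; first exact: expansion_ball_bounded.
split => // phi [phi_dual phi_small].
have [zs [c [uzs phi_rep]]] := dual_representation tychX phi_dual.
pose lvl z := Num.trunc (w z).
have lvlU z : z \in zs -> open (U (lvl z)) /\ U (lvl z) z.
  by move=> _; split; [exact: oU|exact: sU _ _ (level_set_trunc (w0 z))].
have [g [cg [gz gb]]] :=
  interpolation tychX zs (fun z => Num.sg (c z) * w z) _ uzs lvlU.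
have Bg : expansion_ball U g.
  split => // y b b0 Ub; apply: gb => // z zzs Uzy.
  have /andP[_ w_lt] := level_set_trunc (w0 z).
  apply: le_trans (Ub _ Uzy); apply: le_trans (ltW w_lt).
  rewrite normrM (gtr0_norm (w0 z)) ler_piMl ?(ltW (w0 z)) //.
  exact: norm_sg_le1.
have hsum : \sum_(z <- zs) `|c z| * w z <= 1.
  have := phi_small g Bg; rewrite /= subr0 phi_rep //.
  rewrite (eq_big_seq (fun z => `|c z| * w z)); last first.
    by move=> z zzs; rewrite gz // mulrA [c z * _]mulrC -normrEsg.
  rewrite ger0_norm; first exact: ltW.
  by apply: sumr_ge0 => z _; rewrite mulr_ge0 // ltW.
have Acomb := barrel_weighted_evcomb barrelA w0 (fun x => (hw x).2) zs c hsum.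
apply: (strong_closed_ext barrelA.2.1 Acomb phi_dual (evcomb_dual _)).
by move=> f cf; rewrite phi_rep // evcomb_map.
Qed.

End DistinguishedFromExpansion.

Section WeightedBall.
Context {R : realType} {X : topologicalType}.
Hypothesis tychX : tychonoff_space R X.
Variable W : X -> R.
Hypothesis W0 : forall x, 0 < W x.

Definition weighted_ball : set ((X -> R) -> R) :=
  [set phi | Cp_dual R X phi /\ exists ps : seq (X * R),
    (forall g, Cp R X g -> phi g = evcomb ps g) /\
    \sum_(p <- ps) `|p.2| * W p.1 <= 1].

Lemma evcomb_weighted_bound (ps : seq (X * R)) (g : X -> R) (k : R) :
  0 <= k -> (forall p, p \in ps -> `|g p.1| <= k * W p.1) ->
  \sum_(p <- ps) `|p.2| * W p.1 <= 1 -> `|evcomb ps g| <= k.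
Proof.
move=> k0 gk ps1; apply: le_trans (ler_norm_sum _ _ _) _.
have -> : k = k * 1 by rewrite mulr1.
apply: le_trans (ler_wpM2l k0 ps1); rewrite mulr_sumr.
rewrite big_seq [X in _ <= X]big_seq; apply: ler_sum => p pps.
by rewrite normrM mulrCA ler_wpM2l // gk.
Qed.

(* An evaluation [t delta_x] in the weighted ball satisfies [|t| W x <= 1]:
   test it against a continuous function equal to 1 at [x] and to 0 at the
   other points involved. *)
Lemma weighted_ball_evaluation x t :
  weighted_ball (fun f => t * f x) -> `|t| * W x <= 1.
Proof.
move=> [_ [ps [ps_rep ps1]]].
have [g [cg [gv _]]] := interpolation_sup tychX (x :: map fst ps)
  (fun y => (y == x)%:R).
have := ps_rep g cg; rewrite gv ?mem_head // eqxx mulr1 => ->.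
rewrite -ler_pdivlMr // mul1r; apply: evcomb_weighted_bound => //.
  by rewrite invr_ge0 ltW.
move=> p pps; rewrite gv ?in_cons ?map_f ?orbT //.
have [->|_] := eqVneq p.1 x; first by rewrite normr1 mulVf ?gt_eqF.
by rewrite normr0 mulr_ge0 ?invr_ge0 // ltW.
Qed.

(* The weighted ball is strongly closed: a functional outside it has weighted
   norm [S > 1], and a suitable unit-bounded test function separates it from
   the ball by [(S - 1) / Wm]. *)
Lemma weighted_ball_closed : strong_closed R X weighted_ball.
Proof.
move=> psi psi_dual psi_out.
have [zs [c [uzs psi_rep]]] := dual_representation tychX psi_dual.
pose S := \sum_(z <- zs) `|c z| * W z.
have S1 : 1 < S.
  rewrite ltNge; apply/negP => S_le1; apply: psi_out; split => //.
  exists (map (fun z => (z, c z)) zs); rewrite big_map; split => //.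
  by move=> g cg; rewrite psi_rep // evcomb_map.
pose Wm := \sum_(z <- zs) W z + 1.
have Wm0 : 0 < Wm by rewrite ltr_wpDl // sumr_ge0 // => z _; exact: ltW.
have W_Wm z : z \in zs -> W z <= Wm.
  move=> zzs; apply: le_trans (_ : \sum_(y <- zs) W y <= Wm).
    by rewrite (bigD1_seq z) //= lerDl sumr_ge0 // => y _; exact: ltW.
  by rewrite lerDl.
pose B := [set g : X -> R | Cp R X g /\ forall y, `|g y| <= 1].
exists B, ((S - 1) / Wm); split.
  by apply: (@pointwise_bounded_Cp_bounded _ _ B (fun=> 1)) => [g []|g y []].
split; first by rewrite divr_gt0 // subr_gt0.
move=> phi [phi_dual phi_near] [_ [ps [ps_rep ps1]]].
pose v y := if y \in zs then Num.sg (c y) * W y / Wm else 0.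
have v_le y : `|v y| <= Wm^-1 * W y /\ `|v y| <= 1.
  rewrite /v; case: ifP => [yzs|_]; last first.
    by rewrite normr0 ler01 mulr_ge0 ?invr_ge0 ?ltW.
  have vW : `|Num.sg (c y) * W y / Wm| <= Wm^-1 * W y.
    rewrite mulrC normrM normrM (gtr0_norm (W0 y)) normfV (gtr0_norm Wm0).
    rewrite ler_pM2l ?invr_gt0 //.
    by apply: ler_piMl; [exact: ltW|exact: norm_sg_le1].
  split => //; apply: le_trans vW _.
  by rewrite mulrC ler_pdivrMr // mul1r W_Wm.
have [g [cg [gv gb]]] := interpolation_sup tychX (zs ++ map fst ps) v.
have Bg : B g by split => //; apply: gb => // z _; exact: (v_le z).2.
have psi_g : psi g = S / Wm.
  rewrite psi_rep // /S mulr_suml; apply: eq_big_seq => z zzs.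
  rewrite gv ?mem_cat ?zzs // /v zzs !mulrA; congr (_ * _ * _).
  by rewrite mulrC -normrEsg.
have phi_g : `|phi g| <= Wm^-1.
  rewrite ps_rep //; apply: evcomb_weighted_bound => //.
    by rewrite invr_ge0 ltW.
  by move=> p pps; rewrite gv ?mem_cat ?map_f ?orbT //; exact: (v_le _).1.
have := phi_near g Bg; rewrite psi_g mulrBl mul1r.
have := ler_norm (phi g); have := ler_norm (S / Wm - phi g); rewrite distrC.
lra.
Qed.

(* The weighted ball is absolutely convex: rescale and concatenate the
   combinations of evaluations. *)
Lemma weighted_ball_convex phi psi a b :
  weighted_ball phi -> weighted_ball psi -> `|a| + `|b| <= 1 ->
  weighted_ball (a *: phi + b *: psi).
Proof.
move=> [phi_dual [ps1 [rep1 ps1_le]]] [psi_dual [ps2 [rep2 ps2_le]]] ab1.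
have -> : a *: phi + b *: psi = (fun f => a * phi f + b * psi f).
  by apply: funext => f; rewrite !fctE.
split; first exact: dual_comb.
pose scale r (ps : seq (X * R)) := map (fun p => (p.1, r * p.2)) ps.
have scaleE r ps g : evcomb (scale r ps) g = r * evcomb ps g.
  by rewrite /evcomb big_map mulr_sumr; apply: eq_bigr => p _ /=; rewrite mulrA.
have scale_le r ps : \sum_(p <- ps) `|p.2| * W p.1 <= 1 ->
    \sum_(p <- scale r ps) `|p.2| * W p.1 <= `|r|.
  move=> ps_le; rewrite big_map /=.
  under eq_bigr do rewrite normrM -mulrA.
  by rewrite -mulr_sumr; apply: ler_piMr.
exists (scale a ps1 ++ scale b ps2); split.
  move=> g cg; rewrite /evcomb big_cat -/(evcomb _ g) -/(evcomb _ g).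
  by rewrite !scaleE rep1 ?rep2.
by rewrite big_cat; apply: le_trans ab1; apply: lerD; exact: scale_le.
Qed.

(* The weighted ball is absorbing: [phi / s] lies in it once [|s|] exceeds
   the weighted norm of [phi]. *)
Lemma weighted_ball_absorbing phi : Cp_dual R X phi ->
  exists r : R, 0 < r /\ forall s : R, r <= `|s| ->
    exists chi, weighted_ball chi /\ phi = s *: chi.
Proof.
move=> phi_dual.
have [zs [c [uzs phi_rep]]] := dual_representation tychX phi_dual.
pose S := \sum_(z <- zs) `|c z| * W z.
have S0 : 0 <= S by apply: sumr_ge0 => z _; rewrite mulr_ge0 // ltW.
exists (S + 1); split; first by rewrite ltr_wpDl.
move=> s Ss; have s_gt0 : 0 < `|s| by apply: lt_le_trans Ss; rewrite ltr_wpDl.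
have s0 : s != 0 by rewrite -normr_gt0.
exists (fun f => s^-1 * phi f); split; last first.
  apply: funext => f; rewrite fctE /=; change (phi f = s * (s^-1 * phi f)).
  by rewrite mulrA divff // mul1r.
split.
  have := dual_comb s^-1 0 phi_dual phi_dual; congr (Cp_dual R X).
  by apply: funext => f; rewrite mul0r addr0.
exists (map (fun z => (z, s^-1 * c z)) zs); split.
  move=> g cg; rewrite phi_rep // evcomb_map mulr_sumr.
  by apply: eq_bigr => z _; rewrite mulrA.
rewrite big_map /=; under eq_bigr do rewrite normrM -mulrA.
rewrite -mulr_sumr normfV ler_pdivrMl // mulr1; apply: le_trans Ss.
by rewrite lerDl.
Qed.

Lemma weighted_ball_barrel : strong_barrel R X weighted_ball.
Proof.
split; first by move=> phi [].
split; first exact: weighted_ball_closed.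
by split; [exact: weighted_ball_convex|exact: weighted_ball_absorbing].
Qed.

(* If the weighted ball contains the strong neighbourhood of 0 given by [B]
   and [eps], then [B] is large at every point: some [f] in [B] has
   [|f x| >= eps W x / 2], since otherwise [2 / W x] times the evaluation at
   [x] would lie in the ball. *)
Lemma weighted_ball_nbhs_large {B : set (X -> R)} {eps : R} : 0 < eps ->
  [set phi | Cp_dual R X phi /\ forall f, B f -> `|phi f - 0| < eps]
    `<=` weighted_ball ->
  forall x, exists f, B f /\ eps * W x / 2 <= `|f x|.
Proof.
move=> eps0 nbhs_sub x; apply: contrapT => small.
have Bsmall f : B f -> `|f x| < eps * W x / 2.
  by move=> Bf; rewrite ltNge; apply/negP => large; apply: small; exists f.
pose t := 2 / W x.
have t0 : 0 < t by rewrite divr_gt0.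
have : weighted_ball (fun f => t * f x).
  apply: nbhs_sub; split.
    by have := evcomb_dual [:: (x, t)]; rewrite evcomb1.
  move=> f Bf; rewrite subr0 normrM (gtr0_norm t0).
  have -> : eps = t * (eps * W x / 2) by rewrite /t; field; rewrite gt_eqF.
  by rewrite ltr_pM2l // Bsmall.
move/weighted_ball_evaluation; rewrite (gtr0_norm t0) /t divfK ?gt_eqF //.
by rewrite lern1.
Qed.

End WeightedBall.

Lemma partition_index {T : Type} {D : nat -> set T} : partition_fam T D ->
  exists w : T -> nat, forall n x, D n x <-> w x = n.
Proof.
move=> [dD cD]; have /choice[w Dw] : forall x, exists n, D n x.
  by move=> x; have : [set: T] x by []; rewrite -cD => -[n _ Dn]; exists n.
exists w => n x; split => [Dn|<-//]; apply: contrapT => wxn.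
by have /seteqP[+ _] := dD _ _ wxn; apply; split.
Qed.

Lemma open_norm_superlevel {R : realType} {X : topologicalType}
    (f : X -> R) (r : R) : continuous f -> open [set y | r < `|f y|].
Proof.
move=> cf; apply: (@open_comp _ _ (fun y => `|f y|) [set s | r < s]); last first.
  exact: open_gt.
by move=> y _; exact: continuous_comp (cf y) (@norm_continuous _ _ _).
Qed.

Section ExpansionFromDistinguished.
Context {R : realType} {X : topologicalType}.
Hypothesis tychX : tychonoff_space R X.

(* (1) => (2): weight each point by one plus the index of its member of the
   partition; the weighted ball is a barrel, hence a strong neighbourhood of
   0, given by a bounded set [B] and [eps].  The points where some function
   of [B] exceeds [eps (n + 1) / 4] form the expansion, which is point-finite
   because [B] is pointwise bounded. *)
Lemma distinguished_partition_expandable :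
  Cp_distinguished R X -> partition_expandable X.
Proof.
move=> distX D partD; have [w Dw] := partition_index partD.
pose W x : R := (w x).+1%:R.
have W0 x : 0 < W x by rewrite ltr0Sn.
have [B [eps [Bb [eps0 Bsub]]]] := distX _ (weighted_ball_barrel tychX W W0).
have B_large := weighted_ball_nbhs_large tychX W W0 eps0 Bsub.
pose U n := \bigcup_(f in B) [set y | eps * n.+1%:R / 4 < `|f y|].
exists U; split.
  move=> n x /Dw wxn; have [f [Bf fx]] := B_large x; exists f => //=.
  apply: lt_le_trans fx; rewrite /W wxn.
  have : 0 < eps * n.+1%:R by rewrite mulr_gt0.
  lra.
split.
  move=> n; apply: bigcup_open => f Bf; apply: open_norm_superlevel.
  exact: Bb.1.
move=> y; have [K BK] := Cp_bounded_pointwise Bb y.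
apply: (@bounded_nat_finite _ (Num.Def.archi_bound (4 * K / eps))).
move=> n [f Bf /= fy].
have n1K : (n.+1%:R : R) < 4 * K / eps.
  rewrite ltr_pdivlMr // mulrC; have := BK f Bf; lra.
have K0 : 0 <= 4 * K / eps.
  by rewrite divr_ge0 ?(ltW eps0) // mulr_ge0 // (le_trans _ (ltW (BK f Bf))).
have := lt_trans n1K (archi_boundP K0).
by rewrite ltr_nat => /ltnW.
Qed.

End ExpansionFromDistinguished.

Local Close Scope ring_scope.

(* The equivalences hold for every Tychonoff space. *)
Theorem theorem2p1 (R : realType) (X : topologicalType) :
  tychonoff_space R X -> infinite_set [set: X] ->
  [/\ (Cp_distinguished R X <->
        forall D : nat -> set X, partition_fam X D ->
          exists U, point_finite_open_expansion X D U),
      ((forall D : nat -> set X, partition_fam X D ->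
          exists U, point_finite_open_expansion X D U) <->
       forall D : nat -> set X, pairwise_disjoint_fam X D ->
          exists U, point_finite_open_expansion X D U) &
      ((forall D : nat -> set X, pairwise_disjoint_fam X D ->
          exists U, point_finite_open_expansion X D U) <->
       delta_space X)].
Proof.
move=> tychX _; split.
- split; first exact: distinguished_partition_expandable.
  exact: partition_expandable_distinguished.
- split; first exact: partition_disjoint_expandable.
  exact: disjoint_partition_expandable.
- by split; [exact: disjoint_expandable_delta|exact: delta_disjoint_expandable].
Qed.
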